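(* In the variation of the temporal graph discovery game in which the Discoverer does not learn the static edge set, there is an algorithm that wins the game on any temporal graph with node set $V$ and lifetime $T_{\max}$ in $|V|\,T_{\max}$ rounds.
   Context: A temporal graph $\mathcal G=(V,E,\lambda)$ with lifetime $T_{\max}$ consists of a finite undirected static graph $(V,E)$ and a labeling $\lambda:E\to\{1,\dots,T_{\max}\}$; edge $e$ is present only at time $\lambda(e)$. Infection model with parameter $\delta\in\mathbb N^+$: given seed infections $S\subseteq V\times[0,T_{\max}]$ (at most $k$ per round), a seed $(u,t)$ makes $u$ infected at time $t$; otherwise a susceptible node $u$ becomes infected at time $t$ iff some neighbour $v$ infectious at time $t$ has $\lambda(uv)=t$ (exactly one infector recorded if several exist). A node infected at time $t$ is infectious at times $t+1,\dots,t+\delta$ and resistant afterwards. The infection log records triples $(u,v,t)$ ($u$ infected $v$ at time $t$). Game (unknown static graph variant): the Discoverer knows only $V$; each round it submits seeds and the Adversary answers with an infection log consistent with the seeds under some temporal graph on $V$ consistent with all previous answers. The Discoverer wins iff the temporal graph (edges and labels) it finally submits equals the Adversary's final temporal graph consistent with all logs. *)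

From mathcomp Require Import all_boot.
Set Implicit Arguments. Unset Strict Implicit. Unset Printing Implicit Defensive.

Notation time Tmax := 'I_(Tmax.+1).

(* A temporal graph on V with lifetime Tmax is represented canonically as a
   finite function on ordered pairs: g (u,v) = Some t iff uv is an edge with
   label t; it must be symmetric, loopless, and labels lie in {1..Tmax}.
   With this canonical representation, equality of temporal graphs
   (edges and labels) is Leibniz equality. *)
Definition tgraph (V : finType) (Tmax : nat) := {ffun V * V -> option (time Tmax)}.

Definition valid_tgraph (V : finType) (Tmax : nat) (g : tgraph V Tmax) : Prop :=
  (forall u v, g (u, v) = g (v, u)) /\
  (forall u, g (u, u) = None) /\
  (forall u v (t : time Tmax), g (u, v) = Some t -> 0 < t).

Definition seeds (V : finType) (Tmax : nat) := {set V * time Tmax}.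
Definition ilog (V : finType) (Tmax : nat) := {set V * V * time Tmax}.

(* I v = Some s : v got infected at time s; None : never infected. *)
Definition infectious (V : finType) (Tmax delta : nat)
    (I : V -> option (time Tmax)) (u : V) (t : time Tmax) : Prop :=
  exists s : time Tmax, I u = Some s /\ s < t /\ t <= s + delta.

(* v would become infected at time t if it were susceptible at time t *)
Definition triggered (V : finType) (Tmax delta : nat) (g : tgraph V Tmax)
    (S : seeds V Tmax) (I : V -> option (time Tmax)) (v : V) (t : time Tmax) : Prop :=
  (v, t) \in S \/ exists u, infectious delta I u t /\ g (u, v) = Some t.

Definition infection_run (V : finType) (Tmax delta : nat) (g : tgraph V Tmax)
    (S : seeds V Tmax) (I : V -> option (time Tmax)) : Prop :=
  forall v, match I v with
    | Some t => triggered delta g S I v t /\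
                (forall t' : time Tmax, t' < t -> ~ triggered delta g S I v t')
    | None => forall t : time Tmax, ~ triggered delta g S I v t
    end.

Definition valid_log (V : finType) (Tmax delta : nat) (g : tgraph V Tmax)
    (S : seeds V Tmax) (L : ilog V Tmax) : Prop :=
  exists I, infection_run delta g S I /\
    (forall u v t, (u, v, t) \in L ->
        [/\ I v = Some t, (v, t) \notin S, infectious delta I u t & g (u, v) = Some t]) /\
    (forall v t, I v = Some t -> (v, t) \notin S -> exists! u, (u, v, t) \in L).

(* A history is the chronological list of rounds (seeds submitted, log received). *)
Definition history (V : finType) (Tmax : nat) := seq (seeds V Tmax * ilog V Tmax).

Definition consistent (V : finType) (Tmax delta : nat) (g : tgraph V Tmax)
    (h : history V Tmax) : Prop :=
  valid_tgraph g /\ (forall r, r \in h -> valid_log delta g r.1 r.2).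

(* h is a possible play of the Discoverer strategy st against some Adversary:
   in round i the seeds are st applied to the earlier rounds, and the answer
   is consistent (together with all previous answers) with some temporal graph. *)
Definition play_of (V : finType) (Tmax delta : nat)
    (st : history V Tmax -> seeds V Tmax) (h : history V Tmax) : Prop :=
  forall i, i < size h ->
    (nth (set0, set0) h i).1 = st (take i h) /\
    exists g : tgraph V Tmax, consistent delta g (take i.+1 h).

From mathcomp Require Import all_boot.
Set Implicit Arguments. Unset Strict Implicit. Unset Printing Implicit Defensive.

(* In the round seeded with the single infection (v, s), v is the only node
   infected at time s and nobody is infected earlier.  Hence every neighbour u
   with label(vu) = s + 1 is infected at time s + 1, and the only node that can
   be logged as its infector is v, so the log contains (v, u, s + 1).  Seeding
   every pair (v, s) with s < Tmax, one per round, therefore makes every edge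
   appear in some log, while every logged triple is an edge: the temporal graph
   is read off the union of the logs. *)

Section InfectionRun.

Variables (V : finType) (Tmax delta : nat) (g : tgraph V Tmax).
Variables (S : seeds V Tmax) (I : V -> option (time Tmax)).
Hypothesis run : infection_run delta g S I.

Lemma infection_run_cause x t : I x = Some t ->
  (x, t) \in S \/ exists y (s : time Tmax), [/\ I y = Some s, s < t & g (y, x) = Some t].
Proof.
move=> Ix; have := run x; rewrite Ix => -[[seed | [y [[s [Iy [lt_st _]]] gyx]]] _].
  by left.
by right; exists y, s.
Qed.

Lemma infection_run_triggered x t : triggered delta g S I x t ->
  exists2 t' : time Tmax, I x = Some t' & t' <= t.
Proof.
have := run x; case: (I x) => [t'|] => [[_ first_t'] trig | never trig].
  by exists t' => //; rewrite leqNgt; apply/negP => /first_t'.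
by case: (never t).
Qed.

End InfectionRun.

Section SingleSeed.

Variables (V : finType) (Tmax delta : nat) (g : tgraph V Tmax).
Variables (v : V) (s : time Tmax) (I : V -> option (time Tmax)).
Hypothesis run : infection_run delta g [set (v, s)] I.

Lemma single_seed_infected_after x t : I x = Some t -> s <= t.
Proof.
have [n le_tn] : exists n, t <= n by exists t.
elim: n x t le_tn => [|n IHn] x t le_tn Ix;
  have [/set1P[_ ->] // | [y [s' [Iy lt_s't _]]]] := infection_run_cause run Ix.
- by move: lt_s't; rewrite ltnNge (leq_trans le_tn).
- by apply: leq_trans (ltnW lt_s't); apply: IHn Iy; rewrite -ltnS (leq_trans lt_s't).
Qed.

Lemma single_seed_infected_by_seed_time x t : I x = Some t -> t <= s -> x = v.
Proof.
move=> Ix le_ts; have [/set1P[-> _] // | [y [s' [Iy lt_s't _]]]] := infection_run_cause run Ix.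
by have := single_seed_infected_after Iy; rewrite leqNgt (leq_trans lt_s't).
Qed.

Lemma single_seed_infected : I v = Some s.
Proof.
have seed : triggered delta g [set (v, s)] I v s by left; apply/set1P.
have [t Iv le_ts] := infection_run_triggered run seed.
suff <- : t = s by [].
by apply/val_inj/eqP; rewrite eqn_leq le_ts (single_seed_infected_after Iv).
Qed.

End SingleSeed.

Lemma single_seed_log_next_edge (V : finType) (Tmax delta : nat) (g : tgraph V Tmax)
    (v u : V) (s t : time Tmax) (L : ilog V Tmax) :
  0 < delta -> valid_tgraph g -> valid_log delta g [set (v, s)] L ->
  t = s.+1 :> nat -> g (v, u) = Some t -> (v, u, t) \in L.
Proof.
move=> delta_gt0 [_ [loopless _]] [I [run [log_sound log_complete]]] ts gvu.
have neq_uv : u != v by apply: contra_eqN gvu => /eqP ->; rewrite loopless.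
have v_infectious : infectious delta I v t.
  by exists s; rewrite (single_seed_infected run) ts ltnSn -{1}(addn0 s) ltn_add2l.
have Iu : I u = Some t.
  have u_triggered : triggered delta g [set (v, s)] I u t by right; exists v.
  have [t' Iu le_t't] := infection_run_triggered run u_triggered.
  suff -> : t = t' by [].
  apply/val_inj/eqP; rewrite /= eqn_leq le_t't andbT ts ltnNge; apply/negP => le_t's.
  by move: neq_uv; rewrite (single_seed_infected_by_seed_time run Iu le_t's) eqxx.
have not_seed : (u, t) \notin [set (v, s)] by apply: contra neq_uv => /set1P[->].
have [w [Lw _]] := log_complete u t Iu not_seed.
have [_ _ [s' [Iw [lt_s't _]]] _] := log_sound _ _ _ Lw.
suff <- : w = v by [].
by apply: (single_seed_infected_by_seed_time run Iw); rewrite -ltnS -ts.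
Qed.

Section SeedingStrategy.

Variables (V : finType) (Tmax : nat).

(* Seed times range over 0 .. Tmax - 1, one below the edge labels 1 .. Tmax. *)
Definition seed_schedule : seq (V * time Tmax) :=
  [seq (v, widen_ord (leqnSn Tmax) s) | v <- enum V, s <- enum 'I_Tmax].

Definition seed_strategy (h : history V Tmax) : seeds V Tmax :=
  if ohead (drop (size h) seed_schedule) is Some p then [set p] else set0.

Definition logged (h : history V Tmax) (e : V * V * time Tmax) : bool :=
  has (fun r : seeds V Tmax * ilog V Tmax => e \in r.2) h.

Definition read_graph (h : history V Tmax) : tgraph V Tmax :=
  [ffun vu => [pick t | logged h (vu.1, vu.2, t)]].

Lemma card_seed_strategy h : #|seed_strategy h| <= 1.
Proof. by rewrite /seed_strategy; case: ohead => [p|]; rewrite ?cards1 ?cards0. Qed.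

Lemma size_seed_schedule : size seed_schedule = #|V| * Tmax.
Proof. by rewrite size_allpairs size_enum_ord cardE. Qed.

Variable delta : nat.

Lemma seed_strategy_played (h : history V Tmax) p :
  size h = #|V| * Tmax -> play_of delta seed_strategy h -> p \in seed_schedule ->
  exists2 r, r \in h & r.1 = [set p].
Proof.
move=> size_h play p_sched.
have lt_ih : index p seed_schedule < size h by rewrite size_h -size_seed_schedule index_mem.
exists (nth (set0, set0) h (index p seed_schedule)); first exact: mem_nth.
have [-> _] := play _ lt_ih.
rewrite /seed_strategy (size_takel (ltnW lt_ih)).
by rewrite (drop_nth p) ?index_mem // nth_index.
Qed.

Lemma logged_edge (g : tgraph V Tmax) h u w t :
  consistent delta g h -> logged h (u, w, t) -> g (u, w) = Some t.
Proof.
move=> [_ logs_valid] /hasP[r /logs_valid[I [_ [log_sound _]]]].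
by case/log_sound.
Qed.

Lemma edge_logged (g : tgraph V Tmax) h v u t :
  0 < delta -> size h = #|V| * Tmax -> play_of delta seed_strategy h ->
  consistent delta g h -> g (v, u) = Some t -> logged h (v, u, t).
Proof.
move=> delta_gt0 size_h play [g_valid logs_valid] gvu.
have t_gt0 : 0 < t by have [_ [_ label_gt0]] := g_valid; apply: label_gt0 gvu.
have lt_pred_t : t.-1 < Tmax by rewrite prednK // -ltnS.
set s := widen_ord (leqnSn Tmax) (Ordinal lt_pred_t).
have t_next : t = s.+1 :> nat by rewrite /= prednK.
have sched : (v, s) \in seed_schedule.
  by apply/allpairsP; exists (v, Ordinal lt_pred_t); rewrite !mem_enum.
have [r hr r_seeds] := seed_strategy_played size_h play sched.
apply/hasP; exists r => //.
apply: (single_seed_log_next_edge delta_gt0 g_valid _ t_next gvu).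
by rewrite -r_seeds; apply: logs_valid.
Qed.

End SeedingStrategy.

Theorem mainTheorem14 (V : finType) (Tmax delta k : nat) :
  0 < delta -> 0 < k ->
  exists (st : history V Tmax -> seeds V Tmax) (guess : history V Tmax -> tgraph V Tmax),
    (forall h, #|st h| <= k) /\
    forall h : history V Tmax,
      size h = #|V| * Tmax -> play_of delta st h ->
      forall g : tgraph V Tmax, consistent delta g h -> g = guess h.
Proof.
move=> delta_gt0 k_gt0; exists (@seed_strategy V Tmax), (@read_graph V Tmax).
split=> [h | h size_h play g cons_g].
  exact: leq_trans (card_seed_strategy h) k_gt0.
apply/ffunP => -[v u]; rewrite ffunE /=.
case: pickP => [t /(logged_edge cons_g) // | not_logged].
case gvu: (g (v, u)) => [t|] //.
by move: (not_logged t); rewrite (edge_logged delta_gt0 size_h play cons_g gvu).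
Qed.
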